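(* Assume $\mathrm{recc}(C)\subseteq\mathrm{recc}(P^B)$. Fix $k\in N_2$ and assume $N_0\not\subseteq J$. Let $S\subseteq M'$. Then every $x\in P^B\setminus S_k^C$ satisfies $$\sum_{i\in S}x_i-\sum_{j\in N\setminus J}\frac{x_j}{\varepsilon'_j(S)}\le0.$$
   Context: Let $A\in\mathbb{R}^{m\times n}$ have full row rank, $b\in\mathbb{R}^m$, and $P=\{x\in\mathbb{R}^n_+:Ax=b\}$. Let $C\subseteq\mathbb{R}^n$ be an open convex set. Fix a basis $B$ of $P$ with nonbasic set $N=\{1,\dots,n\}\setminus B$. Write $P=\{x:x_i=\bar b_i-\sum_{j\in N}\bar a_{ij}x_j\ (i\in B),\ x\ge0\}$ with $\bar b\ge0$. The basic solution $\bar x$ has $\bar x_i=\bar b_i$ ($i\in B$) and $0$ ($i\in N$). $P^B$ is obtained by dropping $x_i\ge0$ for $i\in B$. For $j\in N$, $\bar r^j$ has $\bar r^j_k=-\bar a_{kj}$ ($k\in B$), $\bar r^j_j=1$, and $0$ otherwise. Thus $P^B=\{\bar x+\sum_{j\in N}x_j\bar r^j:x_j\ge0\}$, and for $x\in P^B$ the $x_j$ ($j\in N$) are the coefficients in this representation. It is assumed that $\bar x\notin\mathrm{cl}(C)$. For $j\in N$, $\alpha_j=\inf\{\lambda\ge0:\bar x+\lambda\bar r^j\in C\}$ and $\beta_j=\sup\{\lambda\ge0:\bar x+\lambda\bar r^j\in C\}$, with $\alpha_j=+\infty$, $\beta_j=-\infty$ if the halfline misses $C$. Define - $N_0=\{j:\alpha_j=+\infty,\beta_j=-\infty\}$;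 - $N_1=\{j:\alpha_j\in(0,\infty),\beta_j=+\infty\}$; - $N_2=\{j:\alpha_j\in(0,\infty),\beta_j\in(\alpha_j,\infty)\}$. For a set $K$, $\mathrm{recc}(K)=\{d:x+\lambda d\in K\ \forall x\in K,\lambda\ge0\}$. We use the convention $t/+\infty=0$. For $k\in N_2$, let $S_k^C=\{\bar x\}+\mathrm{conv}\big(\bigcup_{j\in N_2}\{\lambda\bar r^j:0\le\lambda<\beta_j\}\big)+\{\lambda\bar r^k:\lambda\le0\}+\mathrm{recc}(C)$. Let $J=\{i\in N:\bar r^i\in\mathrm{recc}(S_k^C)\}$. For $i\in J$ and $j\in N\setminus J$, let $\gamma'_{ij}=\sup\{\gamma\ge0:\bar r^i+\gamma\bar r^j\in\mathrm{recc}(S_k^C)\}$. Let $M'=\{i\in J:\gamma'_{ij}>0\ \forall j\in N\setminus J\}$. For $S\subseteq M'$ and $j\in N\setminus J$, $\varepsilon'_j(S)=\min_{i\in S}\gamma'_{ij}$ if $S\ne\emptyset$, and $+\infty$ otherwise. *)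

From HB Require Import structures.
From mathcomp Require Import all_boot all_order all_algebra.
From mathcomp Require Import all_classical all_reals all_analysis.
Set Implicit Arguments. Unset Strict Implicit. Unset Printing Implicit Defensive.
Import Order.TTheory GRing.Theory Num.Theory.
Import numFieldNormedType.Exports.
Local Open Scope classical_set_scope.
Local Open Scope ring_scope.

Section Defs.
Variable R : realType.
Variables m n : nat.

Definition xco (x : 'cV[R]_n) (i : 'I_n) : R := x i 0.

Definition recc (K : set 'cV[R]_n) : set 'cV[R]_n :=
  [set d | forall x, K x -> forall l : R, 0 <= l -> K (x + l *: d)].

Definition msum (X Y : set 'cV[R]_n) : set 'cV[R]_n :=
  [set z | exists x, X x /\ exists y, Y y /\ z = x + y].

Definition conv_hull (X : set 'cV[R]_n) : set 'cV[R]_n :=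
  [set y | exists (p : nat) (t : 'I_p -> R) (z : 'I_p -> 'cV[R]_n),
     (forall i, 0 <= t i) /\ \sum_(i < p) t i = 1 /\ (forall i, X (z i)) /\
     y = \sum_(i < p) t i *: z i].

(* --- Simplex tableau data attached to a basis ---
   A basis is given by an injective enumeration bas : 'I_m -> 'I_n of the basic
   variables, with A_B = colsub bas A invertible. *)
Variable A : 'M[R]_(m, n).
Variable b : 'cV[R]_m.
Variable bas : 'I_m -> 'I_n.

Definition AB : 'M[R]_m := colsub bas A.
Definition Abar : 'M[R]_(m, n) := invmx AB *m A.   (* abar_{bas p, j} = Abar p j *)
Definition bbar : 'cV[R]_m := invmx AB *m b.       (* bbar_{bas p} = bbar p 0 *)

Definition Bset : {set 'I_n} := [set bas p | p : 'I_m].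
Definition Nset : {set 'I_n} := ~: Bset.

Definition Ppoly : set 'cV[R]_n :=
  [set x | A *m x = b /\ forall i, 0 <= xco x i].

(* P^B: the tableau system with the constraints x_i >= 0, i in B, dropped *)
Definition PB : set 'cV[R]_n :=
  [set x | (forall p : 'I_m,
             xco x (bas p) = bbar p 0 - \sum_(j in Nset) Abar p j * xco x j)
         /\ (forall j, j \in Nset -> 0 <= xco x j)].

Definition xbar : 'cV[R]_n := \sum_(p < m) bbar p 0 *: delta_mx (bas p) 0.
Definition rbar (j : 'I_n) : 'cV[R]_n :=
  delta_mx j 0 - \sum_(p < m) Abar p j *: delta_mx (bas p) 0.

Variable C : set 'cV[R]_n.

Local Open Scope ereal_scope.
Definition alpha (j : 'I_n) : \bar R :=
  ereal_inf [set l%:E | l in [set l : R | (0 <= l)%R /\ C (xbar + l *: rbar j)%R]].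
Definition beta (j : 'I_n) : \bar R :=
  ereal_sup [set l%:E | l in [set l : R | (0 <= l)%R /\ C (xbar + l *: rbar j)%R]].

Definition N0 : {set 'I_n} :=
  [set j in Nset | (alpha j == +oo) && (beta j == -oo)].
Definition N1 : {set 'I_n} :=
  [set j in Nset | [&& 0 < alpha j, alpha j < +oo & beta j == +oo]].
Definition N2 : {set 'I_n} :=
  [set j in Nset | [&& 0 < alpha j, alpha j < +oo, alpha j < beta j
                     & beta j < +oo]].
Local Close Scope ereal_scope.

Variable k : 'I_n.

Definition SkC : set 'cV[R]_n :=
  msum (msum (msum [set xbar]
     (conv_hull [set v | exists2 j, j \in N2 &
                   exists l : R, [/\ 0 <= l, (l%:E < beta j)%E & v = l *: rbar j]]))
     [set v | exists l : R, l <= 0 /\ v = l *: rbar k])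
   (recc C).

Definition Jset : {set 'I_n} :=
  [set i in Nset | `[< recc SkC (rbar i) >]].

Local Open Scope ereal_scope.
Definition gam' (i j : 'I_n) : \bar R :=
  ereal_sup [set g%:E | g in [set g : R | (0 <= g)%R /\ recc SkC (rbar i + g *: rbar j)%R]].

Definition Mset' : {set 'I_n} :=
  [set i in Jset | [forall j in Nset :\: Jset, 0 < gam' i j]].

Definition eps' (S : {set 'I_n}) (j : 'I_n) : \bar R :=
  \big[Order.min/+oo]_(i in S) gam' i j.
Local Close Scope ereal_scope.

(* t / e with the convention t / +oo = 0 *)
Definition edivr (t : R) (e : \bar R) : R :=
  match e with EFin r => t / r | _ => 0 end.

End Defs.

From Pilot Require Import Defs.
From HB Require Import structures.
From mathcomp Require Import all_boot all_order all_algebra.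
From mathcomp Require Import all_classical all_reals all_analysis.
Import Order.TTheory GRing.Theory Num.Theory.
Import numFieldNormedType.Exports.
Set Implicit Arguments. Unset Strict Implicit. Unset Printing Implicit Defensive.
Local Open Scope classical_set_scope.
Local Open Scope ring_scope.

(** Write [x = xbar + \sum_(j in N) x_j rbar^j]; [xbar] lies in [S_k^C] because
  [0 < alpha_k < beta_k], and the rays [rbar^i], [i in J], lie in the convex cone
  [recc(S_k^C)]. If the inequality failed, [s := \sum_(i in S) x_i] would exceed
  [\sum_(j in N\J) x_j / eps'_j], so there are [c_j > x_j / eps'_j] with
  [\sum_j c_j <= s]. For [i in S] the identity
  [s rbar^i + \sum_j x_j rbar^j = \sum_j c_j (rbar^i + (x_j / c_j) rbar^j)
     + (s - \sum_j c_j) rbar^i]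
  exhibits the left side as a conic combination of recession directions, since
  [x_j / c_j < eps'_j <= gam'_ij]. Averaging over [i in S] with weights [x_i / s]
  puts [x - xbar] in [recc(S_k^C)], i.e. [x] in [S_k^C]. *)

Lemma exists_pos_slack (R : realFieldType) (I : finType) (P : {pred I})
    (e : I -> R) (s : R) :
  \sum_(j in P) e j < s -> exists2 eta, 0 < eta & \sum_(j in P) (e j + eta) <= s.
Proof.
move=> lt_es; set d := s - \sum_(j in P) e j.
have d_gt0 : 0 < d by rewrite subr_gt0.
have N1_gt0 : 0 < #|P|%:R + 1 :> R by rewrite ltr_wpDl.
exists (d / (#|P|%:R + 1)); first exact: divr_gt0.
rewrite big_split /= sumr_const -lerBrDl -/d; set eta := d / _.
by rewrite -mulr_natr /eta -mulrA ger_pMr // ler_pdivrMl // mulr1 lerDl.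
Qed.

Section RecessionCone.
Variables (R : realType) (n : nat).
Implicit Types (K : set 'cV[R]_n) (u v d : 'cV[R]_n).

Lemma recc0 K : recc K 0.
Proof. by move=> x Kx l _; rewrite scaler0 addr0. Qed.

Lemma reccD K d1 d2 : recc K d1 -> recc K d2 -> recc K (d1 + d2).
Proof.
by move=> rd1 rd2 x Kx l l_ge0; rewrite scalerDr addrA; apply/rd2/l_ge0/rd1.
Qed.

Lemma reccZ K c d : 0 <= c -> recc K d -> recc K (c *: d).
Proof.
by move=> c_ge0 rd x Kx l l_ge0; rewrite scalerA; apply/rd/mulr_ge0.
Qed.

Lemma reccZ_pos K c d : 0 < c -> recc K (c *: d) -> recc K d.
Proof.
move=> c_gt0 /(@reccZ K c^-1); rewrite scalerK ?gt_eqF //.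
by apply; rewrite invr_ge0 ltW.
Qed.

Lemma recc_sum K (I : finType) (P : {pred I}) (F : I -> 'cV[R]_n) :
  (forall i, i \in P -> recc K (F i)) -> recc K (\sum_(i in P) F i).
Proof. by move=> rF; apply: big_ind => //; [exact: recc0 | exact: reccD]. Qed.

Lemma recc_addr K x d : K x -> recc K d -> K (x + d).
Proof. by move=> Kx /(_ x Kx 1 ler01); rewrite scale1r. Qed.

Lemma recc_add_scale_le K u v c g :
  recc K u -> recc K (u + c *: v) -> 0 <= g -> g <= c -> recc K (u + g *: v).
Proof.
move=> ru ruv g_ge0 le_gc; have [c_gt0|] := ltP 0 c; last first.
  move=> c_le0; suff -> : g = 0 by rewrite scale0r addr0.
  by apply/eqP; rewrite eq_le g_ge0 (le_trans le_gc c_le0).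
have -> : u + g *: v = (g / c) *: (u + c *: v) + (1 - g / c) *: u.
  by rewrite scalerDr scalerA divfK ?gt_eqF // scalerBl scale1r [RHS]addrAC subrKC.
apply: reccD; apply: reccZ => //.
- by rewrite divr_ge0 // ltW.
- by rewrite subr_ge0 ler_pdivrMr // mul1r.
Qed.

Lemma recc_scale_add_sum K (I : finType) (P : {pred I}) u (v : I -> 'cV[R]_n)
    (a c : I -> R) (s : R) :
  recc K u -> \sum_(j in P) c j <= s -> (forall j, j \in P -> 0 < c j) ->
  (forall j, j \in P -> recc K (u + (a j / c j) *: v j)) ->
  recc K (s *: u + \sum_(j in P) a j *: v j).
Proof.
move=> ru le_cs c_gt0 ruv.
have -> : s *: u + \sum_(j in P) a j *: v j =
    \sum_(j in P) c j *: (u + (a j / c j) *: v j) + (s - \sum_(j in P) c j) *: u.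
  rewrite [in RHS](eq_bigr (fun j => c j *: u + a j *: v j)); last first.
    by move=> j Pj; rewrite scalerDr scalerA mulrCA divff ?gt_eqF ?mulr1 ?c_gt0.
  rewrite big_split /= -scaler_suml scalerBl.
  by rewrite [RHS]addrAC subrKC.
apply: reccD; last by apply: reccZ; rewrite ?subr_ge0.
by apply: recc_sum => j Pj; apply: reccZ; [exact/ltW/c_gt0 | exact: ruv].
Qed.

End RecessionCone.

Lemma edivr_ge0 (R : realType) (a : R) (e : \bar R) :
  0 <= a -> (0 <= e)%E -> 0 <= edivr a e.
Proof. by case: e => [r| |] //= a_ge0; rewrite lee_fin; apply: divr_ge0. Qed.

Lemma div_lte_of_edivr_lt (R : realType) (a c : R) (e : \bar R) :
  0 <= a -> (0 < e)%E -> edivr a e < c -> ((a / c)%:E < e)%E.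
Proof.
case: e => [r| |] a_ge0 //=; last by move=> *; exact: ltry.
rewrite lte_fin => r_gt0 lt_ac.
have c_gt0 : 0 < c by apply: le_lt_trans lt_ac; exact: divr_ge0 a_ge0 (ltW r_gt0).
by rewrite lte_fin ltr_pdivrMr // mulrC -ltr_pdivrMr.
Qed.

Section Tableau.
Variables (R : realType) (m n : nat) (A : 'M[R]_(m, n)) (b : 'cV[R]_m).
Variable bas : 'I_m -> 'I_n.
Hypothesis basI : injective bas.

Lemma Nset_neq_bas a p : a \in Nset bas -> a != bas p.
Proof. by rewrite inE; apply: contraNneq => ->; rewrite imset_f. Qed.

Lemma sum_delta_bas_mxE (f : 'I_m -> R) q :
  (\sum_(p < m) f p *: delta_mx (bas p) 0 : 'cV[R]_n) (bas q) 0 = f q.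
Proof.
rewrite summxE (bigD1 q) //= big1 => [|p ne_pq]; rewrite !mxE eqxx ?andbT.
  by rewrite mulr1 addr0.
by rewrite (inj_eq basI) eq_sym (negbTE ne_pq) mulr0.
Qed.

Lemma sum_delta_Nset_mxE (f : 'I_m -> R) a : a \in Nset bas ->
  (\sum_(p < m) f p *: delta_mx (bas p) 0 : 'cV[R]_n) a 0 = 0.
Proof.
move=> aN; rewrite summxE big1 // => p _.
by rewrite !mxE (negbTE (Nset_neq_bas p aN)) mulr0.
Qed.

Lemma xbar_bas q : xbar A b bas (bas q) 0 = bbar A b bas q 0.
Proof. exact: sum_delta_bas_mxE. Qed.

Lemma xbar_Nset a : a \in Nset bas -> xbar A b bas a 0 = 0.
Proof. exact: sum_delta_Nset_mxE. Qed.

Lemma rbar_bas j q : j \in Nset bas -> rbar A bas j (bas q) 0 = - Abar A bas q j.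
Proof.
move=> jN; rewrite /rbar 2!mxE [X in _ + X]mxE sum_delta_bas_mxE eq_sym.
by rewrite (negbTE (Nset_neq_bas q jN)) sub0r.
Qed.

Lemma rbar_Nset j a : a \in Nset bas -> rbar A bas j a 0 = (a == j)%:R.
Proof.
by move=> aN; rewrite /rbar 2!mxE [X in _ + X]mxE sum_delta_Nset_mxE // andbT subr0.
Qed.

Lemma PB_decomp x : PB A b bas x ->
  x = xbar A b bas + \sum_(j in Nset bas) xco x j *: rbar A bas j.
Proof.
case=> xB _; apply/matrixP => a c; rewrite ord1 {c} mxE.
have [/imsetP [q _ ->]|aB] := boolP (a \in Bset bas).
  rewrite xbar_bas summxE [LHS]xB -sumrN; congr (_ + _); apply: eq_bigr => j jN.
  by rewrite [RHS]mxE rbar_bas // mulrN mulrC.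
have aN : a \in Nset bas by rewrite inE.
rewrite xbar_Nset // add0r summxE (bigD1 a) //= big1 ?addr0 => [|j /andP [_ ne_ja]].
  by rewrite mxE rbar_Nset // eqxx mulr1.
by rewrite mxE rbar_Nset // eq_sym (negbTE ne_ja) mulr0.
Qed.

End Tableau.

Section MinkowskiHull.
Variables (R : realType) (n : nat).
Implicit Types X Y : set 'cV[R]_n.

Lemma msum_addr0 X Y x : X x -> Y 0 -> Defs.msum X Y x.
Proof. by move=> Xx Y0; exists x; split => //; exists 0; rewrite addr0. Qed.

Lemma sub_conv_hull X : X `<=` conv_hull X.
Proof.
move=> y Xy; exists 1%N, (fun=> 1), (fun=> y).
by split => [_|]; [exact: ler01 | rewrite !big_ord1 scale1r].
Qed.

End MinkowskiHull.

Section SkC.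
Variables (R : realType) (m n : nat) (A : 'M[R]_(m, n)) (b : 'cV[R]_m).
Variables (bas : 'I_m -> 'I_n) (C : set 'cV[R]_n) (k : 'I_n).
Local Notation K := (SkC A b bas C k).
Local Notation J := (Jset A b bas C k).
Local Notation r := (rbar A bas).

Lemma xbar_SkC : k \in N2 A b bas C -> K (xbar A b bas).
Proof.
move=> kN2; have /[!inE] /and5P [_ alpha_gt0 _ lt_ab _] := kN2.
have beta_gt0 := lt_trans alpha_gt0 lt_ab.
apply: msum_addr0; last exact: recc0.
apply: msum_addr0; last by exists 0; rewrite scale0r.
apply: msum_addr0 => //; apply: sub_conv_hull.
by exists k => //; exists 0; rewrite scale0r.
Qed.

Lemma Jset_sub_Nset : J \subset Nset bas.
Proof. by apply/fintype.subsetP => i; rewrite inE => /andP []. Qed.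

Lemma Mset'_sub_Jset : Mset' A b bas C k \subset J.
Proof. by apply/fintype.subsetP => i; rewrite inE => /andP []. Qed.

Lemma Jset_recc i : i \in J -> recc K (r i).
Proof. by rewrite inE => /andP [_ /asboolP]. Qed.

Lemma gam'_recc i j g : i \in J -> 0 <= g ->
  (g%:E < gam' A b bas C k i j)%E -> recc K (r i + g *: r j).
Proof.
move=> iJ g_ge0 /ereal_sup_gt [_ [g' [_ rg'] <-]]; rewrite lte_fin => lt_gg'.
exact: recc_add_scale_le (Jset_recc iJ) rg' g_ge0 (ltW lt_gg').
Qed.

Lemma eps'_le_gam' (S : {set 'I_n}) i j :
  i \in S -> (eps' A b bas C k S j <= gam' A b bas C k i j)%E.
Proof. exact: bigmin_le_cond. Qed.

Lemma eps'_gt0 (S : {set 'I_n}) j :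
  S \subset Mset' A b bas C k -> j \in Nset bas :\: J -> (0 < eps' A b bas C k S j)%E.
Proof.
move=> SM jNJ; apply: lt_bigmin => [|i /(fintype.subsetP SM)]; first exact: ltry.
by rewrite inE => /andP [_ /forallP /(_ j)]; rewrite jNJ.
Qed.

Lemma recc_SkC_Mset' (S : {set 'I_n}) x :
  S \subset Mset' A b bas C k -> (forall j, j \in Nset bas -> 0 <= xco x j) ->
  \sum_(j in Nset bas :\: J) edivr (xco x j) (eps' A b bas C k S j)
    < \sum_(i in S) xco x i ->
  recc K (\sum_(i in S) xco x i *: r i + \sum_(j in Nset bas :\: J) xco x j *: r j).
Proof.
move=> SM x_ge0 lt_es; set s := \sum_(i in S) xco x i.
set U := \sum_(j in Nset bas :\: J) xco x j *: r j.
have SJ i : i \in S -> i \in J.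
  by move=> iS; apply: (fintype.subsetP Mset'_sub_Jset); apply: (fintype.subsetP SM).
have NJ_N j : j \in Nset bas :\: J -> j \in Nset bas by rewrite inE => /andP [].
have e_ge0 j : j \in Nset bas :\: J -> 0 <= edivr (xco x j) (eps' A b bas C k S j).
  by move=> jNJ; rewrite edivr_ge0 ?x_ge0 ?NJ_N // ltW // eps'_gt0.
have s_gt0 : 0 < s := le_lt_trans (sumr_ge0 _ e_ge0) lt_es.
have [eta eta_gt0 le_sum] := exists_pos_slack lt_es.
have rU i : i \in S -> recc K (s *: r i + U).
  move=> iS; apply: recc_scale_add_sum le_sum _ _ => [|j jNJ|j jNJ].
  - exact: Jset_recc (SJ i iS).
  - by rewrite ltr_wpDl ?e_ge0.
  apply: gam'_recc (SJ i iS) _ _.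
    by rewrite divr_ge0 ?x_ge0 ?NJ_N // ltW // ltr_wpDl ?e_ge0.
  apply: lt_le_trans (eps'_le_gam' _ iS).
  by apply: div_lte_of_edivr_lt; rewrite ?x_ge0 ?NJ_N ?eps'_gt0 // ltrDl.
apply: (reccZ_pos s_gt0).
have -> : s *: (\sum_(i in S) xco x i *: r i + U) =
    \sum_(i in S) xco x i *: (s *: r i + U).
  rewrite [in RHS](eq_bigr (fun i => s *: (xco x i *: r i) + xco x i *: U)); last first.
    by move=> i _; rewrite scalerDr !scalerA mulrC.
  by rewrite big_split /= -scaler_sumr -scaler_suml scalerDr.
apply: recc_sum => i iS; apply: reccZ (rU i iS).
by rewrite x_ge0 // (fintype.subsetP Jset_sub_Nset) ?SJ.
Qed.

End SkC.

Theorem theorem6 (R : realType) (m n : nat) (A : 'M[R]_(m, n)) (b : 'cV[R]_m)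
    (bas : 'I_m -> 'I_n) (C : set 'cV[R]_n) (k : 'I_n) (S : {set 'I_n})
    (x : 'cV[R]_n) :
  \rank A = m ->
  injective bas ->
  AB A bas \in unitmx ->
  (forall p, 0 <= bbar A b bas p 0) ->
  open C -> convex_set C ->
  ~ closure C (xbar A b bas) ->
  recc C `<=` recc (PB A b bas) ->
  k \in N2 A b bas C ->
  ~~ (N0 A b bas C \subset Jset A b bas C k) ->
  S \subset Mset' A b bas C k ->
  PB A b bas x -> ~ SkC A b bas C k x ->
  \sum_(i in S) xco x i
    - \sum_(j in Nset bas :\: Jset A b bas C k) edivr (xco x j) (eps' A b bas C k S j)
    <= 0.
Proof.
move=> _ basI _ _ _ _ _ _ kN2 _ SM xPB xNS.
rewrite subr_le0 leNgt; apply/negP => lt_es; apply: xNS.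
have x_ge0 : forall j, j \in Nset bas -> 0 <= xco x j by case: xPB.
have SJ := fintype.subset_trans SM (Mset'_sub_Jset A b bas C k).
rewrite (PB_decomp basI xPB) (big_setID (Jset A b bas C k)) /=.
rewrite (elimT finset.setIidPr (Jset_sub_Nset A b bas C k)) (big_setID S) /=.
rewrite (elimT finset.setIidPr SJ).
apply: recc_addr (xbar_SkC kN2) _; rewrite addrAC; apply: reccD.
  exact: recc_SkC_Mset' SM x_ge0 lt_es.
apply: recc_sum => i; rewrite inE => /andP [_ iJ]; apply: reccZ (Jset_recc iJ).
by rewrite x_ge0 // (fintype.subsetP (Jset_sub_Nset A b bas C k)).
Qed.
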